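(* Let $p$ be a probability measure on $\mathbb{R}^d$ with $M:=\int_{\mathbb{R}^d}\|x\|^2\,p(dx)<\infty$, and let $(p_t)_{t\ge0}$ be the laws of the Ornstein--Uhlenbeck process $dX_t=-X_t\,dt+\sqrt2\,dB_t$, $X_0\sim p$. Then for $0<\tau<\frac{d}{M^2}$, $W_2(p,p_\tau)\le\sqrt{3\tau d}$.
   Context: $W_2$ denotes the 2-Wasserstein distance. *)

(* R^d is modelled as d.-tuple R with the product
   (coordinate) sigma-algebra provided by mathcomp-analysis, i.e. the Borel
   sigma-algebra of R^d. *)
From HB Require Import structures.
From mathcomp Require Import all_boot all_order all_algebra.
From mathcomp Require Import all_classical all_reals all_analysis.
Set Implicit Arguments. Unset Strict Implicit. Unset Printing Implicit Defensive.
Import Order.TTheory GRing.Theory Num.Theory.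
Local Open Scope classical_set_scope.
Local Open Scope ring_scope.

Section defs.
Context {R : realType}.

Definition sqnorm (d : nat) (x : d.-tuple R) : R :=
  \sum_(i < d) (tnth x i) ^+ 2.

Definition sqdist (d : nat) (x y : d.-tuple R) : R :=
  \sum_(i < d) (tnth x i - tnth y i) ^+ 2.

(* standard Gaussian N(0, I_d) on R^d, built as the d-fold product of the
   library's standard normal law normal_prob 0 1 (mean 0, std. dev. 1) *)
Fixpoint std_gauss (d : nat) : set (d.-tuple R) -> \bar R :=
  match d with
  | 0 => fun A => if `[< A [tuple] >] then 1%E else 0%E
  | n.+1 => fun A =>
      (\int[normal_prob (0 : R) 1]_x @std_gauss n [set t | A (cons_tuple (x : R) t)])%E
  end.

(* law of the Ornstein--Uhlenbeck process dX = -X dt + sqrt 2 dB at time t,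
   started from X_0 ~ p:  X_t = e^{-t} X_0 + sqrt(1 - e^{-2t}) Z,
   Z ~ N(0, I_d) independent of X_0, i.e.
   p_t(A) = \int p(dx) N(e^{-t} x, (1 - e^{-2t}) I_d)(A). *)
Definition ou_point (d : nat) (t : R) (x z : d.-tuple R) : d.-tuple R :=
  [tuple expR (- t) * tnth x i + Num.sqrt (1 - expR (- (2 * t))) * tnth z i
   | i < d].

Definition ou_law (d : nat) (p : set (d.-tuple R) -> \bar R) (t : R)
  : set (d.-tuple R) -> \bar R :=
  fun A => (\int[p]_x @std_gauss d [set z | A (ou_point t x z)])%E.

Definition coupling (d : nat) (p q : set (d.-tuple R) -> \bar R)
  (pi : probability (d.-tuple R * d.-tuple R)%type R) : Prop :=
  (forall A, measurable A -> pi (fst @^-1` A) = p A) /\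
  (forall A, measurable A -> pi (snd @^-1` A) = q A).

Definition W2sq (d : nat) (p q : set (d.-tuple R) -> \bar R) : \bar R :=
  ereal_inf [set c | exists pi, coupling p q pi /\
                     c = (\int[pi]_z (sqdist z.1 z.2)%:E)%E].

Definition W2 (d : nat) (p q : set (d.-tuple R) -> \bar R) : \bar R :=
  match W2sq p q with
  | EFin c => (Num.sqrt c)%:E
  | +oo%E => +oo%E
  | -oo%E => -oo%E
  end.

End defs.

From HB Require Import structures.
From mathcomp Require Import all_boot all_order all_algebra.
From mathcomp Require Import all_classical all_reals all_analysis.
From mathcomp Require Import measurable_realfun.
From mathcomp Require Import ring lra.
Import Order.TTheory GRing.Theory Num.Theory.
Import numFieldTopology.Exports.
Local Open Scope classical_set_scope.
Local Open Scope ring_scope.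

(* Couple X_0 ~ p with X_tau = e^{-tau} X_0 + sqrt(1 - e^{-2 tau}) Z, where Z is
   an independent standard Gaussian.  Since Z is centred and E Z_i^2 <= 1, the
   cost E|X_0 - X_tau|^2 is at most (1 - e^{-tau})^2 M + (1 - e^{-2 tau}) d.
   With 1 - e^{-s} <= s the second term is at most 2 tau d, and the first is at
   most tau d: it is below tau^2 M^2 <= tau d when M >= 1, and below tau when
   M <= 1. *)

Lemma integral_probability_cst {d} {T : measurableType d} {R : realType}
    (P : probability T R) (c : \bar R) :
  (\int[P]_x c = c)%E.
Proof.
by rewrite (integral_cst P measurableT c) -[RHS]mule1; congr (_ * _)%E;
  exact: probability_setT.
Qed.

Section gauss_tuple.
Context {R : realType}.
Local Open Scope ereal_scope.
Local Notation G := (normal_prob (0 : R) 1).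

Definition cons_pair n (xt : measurableTypeR R * n.-tuple R) : n.+1.-tuple R :=
  [tuple of xt.1 :: xt.2].

Lemma measurable_cons_pair n : measurable_fun setT (@cons_pair n).
Proof. exact: measurable_cons. Qed.

HB.instance Definition _ n :=
  isMeasurableFun.Build _ _ _ _ (@cons_pair n) (@measurable_cons_pair n).

(* [std_gauss] is only a set function; this is the same law as a probability. *)
Fixpoint gauss_prob n : probability (n.-tuple R) R :=
  match n with
  | 0 => dirac [tuple]
  | n.+1 => distribution (G \x gauss_prob n) (@cons_pair n)
  end.

Lemma gauss_probE n (A : set (n.-tuple R)) : gauss_prob n A = std_gauss A.
Proof.
elim: n A => [|n IH] A /=.
  rewrite /dirac indicE; case: (asboolP (A [tuple])) => h.
    by rewrite mem_set.
  by rewrite memNset.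
apply: eq_integral => x _ /=; rewrite IH; congr std_gauss.
by apply/seteqP; split => t; rewrite /xsection /= inE => At; congr A: At;
  exact: val_inj.
Qed.

Lemma ge0_integral_gauss_prob_cons n (f : n.+1.-tuple R -> \bar R) :
  measurable_fun setT f -> (forall x, 0 <= f x) ->
  \int[gauss_prob n.+1]_z f z = \int[G]_x \int[gauss_prob n]_t f [tuple of x :: t].
Proof.
move=> mf f0; rewrite ge0_integral_distribution// fubini_tonelli1//.
- exact: measurableT_comp.
- by move=> xt; exact: f0.
Qed.

Lemma ge0_integral_gauss_prob_tnth n (i : 'I_n) (h : R -> \bar R) :
  measurable_fun setT h -> (forall x, 0 <= h x) ->
  \int[gauss_prob n]_z h (tnth z i) = \int[G]_w h w.
Proof.
move=> mh h0; elim: n i => [[]//|n IH] i.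
rewrite ge0_integral_gauss_prob_cons//; last first.
  by apply: measurableT_comp => //; exact: measurable_tnth.
have [->|i0] := eqVneq i ord0.
  under eq_integral do under eq_integral do rewrite tnth0.
  by under eq_integral do rewrite integral_probability_cst.
have [j ->] : exists j, i = lift ord0 j.
  by case: (unliftP ord0 i) i0 => [j ->|->]; [exists j | rewrite eqxx].
under eq_integral do under eq_integral do rewrite tnthS.
under eq_integral do rewrite IH.
exact: integral_probability_cst.
Qed.

End gauss_tuple.

Section lebesgue_reflection.
Context {R : realType}.
Local Open Scope ereal_scope.
Local Notation mu := (@lebesgue_measure R).

Let ge0_integral_split0 (k : R -> R) : (forall x, 0 <= k x)%R -> continuous k ->
  \int[mu]_x (k x)%:E = \int[mu]_(x in `[0%R, +oo[) ((k \o -%R) x)%:E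
                       + \int[mu]_(x in `[0%R, +oo[) (k x)%:E.
Proof.
move=> k0 ck.
have mk : measurable_fun [set: R] k by exact: continuous_measurable_fun.
have mge0 : measurable [set x : R | 0 <= x]%R by rewrite -set_itvcy.
rewrite -(setUv [set x : R | 0 <= x]%R) ge0_integral_setU//=; last 4 first.
- exact: measurableC.
- by apply/measurable_EFinP; rewrite setUv.
- by move=> x _; rewrite lee_fin.
- exact/disj_setPCl.
rewrite addeC -set_itvcy setCitvr; congr (_ + _).
rewrite integral_itv_bndo_bndc; last exact/measurable_EFinP/measurable_funTS.
rewrite -{1}oppr0 ge0_integration_by_substitutionNy//.
exact: continuous_subspaceT.
Qed.

Lemma ge0_integral_comp_oppr (k : R -> R) : (forall x, 0 <= k x)%R -> continuous k ->
  \int[mu]_x (k (- x)%R)%:E = \int[mu]_x (k x)%:E.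
Proof.
move=> k0 ck.
have ckN : continuous (k \o -%R).
  by move=> x; apply: continuous_comp; [exact: continuousN | exact: ck].
rewrite (ge0_integral_split0 (k \o -%R))//= ge0_integral_split0// addeC.
by congr (_ + _); apply: eq_integral => x _ /=; rewrite opprK.
Qed.

End lebesgue_reflection.

Section normal_moments.
Context {R : realType}.
Local Open Scope ereal_scope.
Local Notation mu := (@lebesgue_measure R).
Local Notation G := (normal_prob (0 : R) 1).

Lemma ge0_integral_normal_prob (m s : R) (f : R -> \bar R) :
  measurable_fun setT f -> (forall x, 0 <= f x) ->
  \int[normal_prob m s]_x f x = \int[mu]_x (f x * (normal_pdf m s x)%:E).
Proof.
move=> mf f0.
have dom := normal_prob_dominates m s.
rewrite -(Radon_Nikodym_SigmaFinite.change_of_variables dom)//.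
apply: ae_eq_integral => //.
- apply: emeasurable_funM => //.
  exact: (measurable_int _ (Radon_Nikodym_SigmaFinite.f_integrable dom)).
- by apply: emeasurable_funM => //; apply/measurable_EFinP; exact: measurable_normal_pdf.
- apply: ae_eqe_mul2l; apply: integral_ae_eq => //.
  + exact: Radon_Nikodym_SigmaFinite.f_integrable.
  + by apply/measurable_EFinP; exact: measurable_normal_pdf.
  + by move=> E _ mE; rewrite -Radon_Nikodym_SigmaFinite.f_integral.
Qed.

Lemma normal_pdf0N (s x : R) : s != 0%R -> normal_pdf 0 s (- x) = normal_pdf 0 s x.
Proof. by move=> s0; rewrite normal_pdfE// /normal_fun !subr0 sqrrN. Qed.

Lemma ge0_integral_normal_probN (h : R -> R) : (forall x, 0 <= h x)%R -> continuous h ->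
  \int[G]_w (h (- w))%:E = \int[G]_w (h w)%:E.
Proof.
move=> h0 ch.
have mh : measurable_fun setT h by exact: continuous_measurable_fun.
rewrite !ge0_integral_normal_prob//; last 3 first.
- exact/measurable_EFinP.
- exact/measurable_EFinP/measurableT_comp.
- by move=> x; rewrite lee_fin.
under eq_integral do rewrite -EFinM.
under [RHS]eq_integral do rewrite -EFinM.
rewrite -[RHS]ge0_integral_comp_oppr; last first.
- move=> x; apply: (@continuousM R R h (normal_pdf 0 1) x); first exact: ch.
  by apply: continuous_normal_pdf; rewrite oner_eq0.
- by move=> x; rewrite mulr_ge0 ?normal_pdf_ge0.
by apply: eq_integral => x _; rewrite normal_pdf0N ?oner_neq0.
Qed.

End normal_moments.

Lemma le1_of_scaled_moment_bound {R : realFieldType} (v : R) :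
  (forall s, 1 < s -> s^-1 + (1 - s ^- 2) / 2 / s * v <= 1) -> v <= 1.
Proof.
move=> hv; rewrite leNgt; apply/negP => v1.
pose s := 1 + (v - 1) / 4.
have s1 : 1 < s by rewrite /s; lra.
have s0 : 0 < s by lra.
have s30 : 0 < 2 * s ^+ 3 by rewrite mulr_gt0 // exprn_gt0.
have := hv s s1; rewrite -(ler_pM2r s30) mul1r.
have -> : (s^-1 + (1 - s ^- 2) / 2 / s * v) * (2 * s ^+ 3) =
          2 * s ^+ 2 + (s ^+ 2 - 1) * v by field; rewrite gt_eqF.
(* the hypothesis amounts to v <= 2 s^2 / (s + 1), false for this s *)
move=> h; have : (s + 1) * v <= 2 * s ^+ 2 by nra.
rewrite /s; nra.
Qed.

Section normal_second_moment.
Context {R : realType}.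
Local Open Scope ereal_scope.
Local Notation mu := (@lebesgue_measure R).
Local Notation G := (normal_prob (0 : R) 1).

Lemma normal_pdf0_scale (s x : R) : (0 < s)%R ->
  normal_pdf 0 s x = (s^-1 * normal_pdf 0 1 x * expR ((1 - s ^- 2) / 2 * x ^+ 2))%R.
Proof.
move=> s0; rewrite !normal_pdfE ?gt_eqF ?oner_eq0// /normal_peak /normal_fun.
rewrite !subr0 expr1n mul1r -mulrnAr sqrtrM ?sqr_ge0// sqrtr_sqr ger0_norm ?ltW//.
rewrite invfM -!mulrA -expRD; congr (_ * (_ * expR _))%R.
by rewrite -mulr_natr; field; rewrite gt_eqF.
Qed.

(* Both the N(0, s^2) and the N(0, 1) densities have mass 1; comparing them via
   e^y >= 1 + y bounds E w^2, and s -> 1 then gives E w^2 <= 1. *)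
Lemma normal_second_moment_scaled (s : R) : (1 < s)%R ->
  (s^-1)%:E + ((1 - s ^- 2) / 2 / s)%:E * \int[G]_w (w ^+ 2)%:E <= 1.
Proof.
move=> s1; have s0 : (0 < s)%R by apply: lt_trans s1.
set c := ((1 - s ^- 2) / 2 / s)%R.
have sV0 : (0 <= s^-1)%R by rewrite invr_ge0 ltW.
have c0 : (0 <= c)%R.
  apply: divr_ge0; last exact: ltW.
  apply: divr_ge0 => //; rewrite subr_ge0 invf_le1 ?exprn_gt0//.
  by rewrite -[leLHS](expr1n _ 2) lerXn2r ?nnegrE ?ltW.
have pdf_ge0 (x : R) : (0 <= normal_pdf 0 1 x)%R by exact: normal_pdf_ge0.
have x2pdf_ge0 (x : R) : (0 <= x ^+ 2 * normal_pdf 0 1 x)%R.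
  by rewrite mulr_ge0 ?sqr_ge0 ?pdf_ge0.
have mpdf := @measurable_normal_pdf R 0 1.
have mx2pdf : measurable_fun setT (fun x : R => x ^+ 2 * normal_pdf 0 1 x)%R.
  by apply: measurable_funM => //; exact: measurable_funX.
rewrite ge0_integral_normal_prob//; last 2 first.
- exact/measurable_EFinP/measurable_funX.
- by move=> x; rewrite lee_fin sqr_ge0.
under eq_integral do rewrite -EFinM.
rewrite -(integral_normal_pdf 0 s) -[X in X + _]mule1 -(integral_normal_pdf 0 1).
rewrite -!ge0_integralZl//; last 4 first.
- exact/measurable_EFinP.
- by move=> x _; rewrite lee_fin pdf_ge0.
- exact/measurable_EFinP.
- by move=> x _; rewrite lee_fin x2pdf_ge0.
rewrite -ge0_integralD//; last 4 first.
- by move=> x _; rewrite mule_ge0// lee_fin pdf_ge0.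
- exact/emeasurable_funM/measurable_EFinP.
- by move=> x _; rewrite mule_ge0// lee_fin x2pdf_ge0.
- exact/emeasurable_funM/measurable_EFinP.
apply: ge0_le_integral => //.
- by move=> x _; apply: adde_ge0; apply: mule_ge0; rewrite lee_fin ?pdf_ge0 ?x2pdf_ge0.
- by apply: emeasurable_funD; apply: emeasurable_funM => //; exact/measurable_EFinP.
- by apply/measurable_EFinP; exact: measurable_normal_pdf.
move=> x _; rewrite -!EFinM -EFinD lee_fin (normal_pdf0_scale s x s0).
have k0 : (0 <= s^-1 * normal_pdf 0 1 x)%R by rewrite mulr_ge0 ?pdf_ge0.
suff -> : (s^-1 * normal_pdf 0 1 x + c * (x ^+ 2 * normal_pdf 0 1 x) =
           s^-1 * normal_pdf 0 1 x * (1 + (1 - s ^- 2) / 2 * x ^+ 2))%R.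
  by apply: ler_wpM2l k0 _ _ _; exact: expR_ge1Dx.
by rewrite /c; field; rewrite gt_eqF.
Qed.

Lemma normal_second_moment_le1 : \int[G]_w (w ^+ 2)%:E <= 1.
Proof.
have V0 : 0 <= \int[G]_w (w ^+ 2)%:E by apply: integral_ge0 => x _; rewrite lee_fin sqr_ge0.
move: V0 (@normal_second_moment_scaled); case: (\int[G]_w _) => [v| |]// _ hv.
- rewrite lee_fin; apply: le1_of_scaled_moment_bound => s s1.
  by rewrite -lee_fin EFinD EFinM hv.
- have c0 : (0 < (1 - 2 ^- 2) / 2 / 2 :> R)%R by rewrite !divr_gt0//; lra.
  have two_gt1 : (1 < 2 :> R)%R by lra.
  by have := hv 2%R two_gt1; rewrite gt0_muley ?lte_fin// addey.
Qed.

End normal_second_moment.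

Section normal_affine_square.
Context {R : realType}.
Local Open Scope ereal_scope.
Local Notation G := (normal_prob (0 : R) 1).

Let measurable_sqr_affine (c b : R) : measurable_fun setT (fun w : R => (c + b * w) ^+ 2)%R.
Proof. by apply: measurable_funX; apply: measurable_funD => //; exact: measurable_funM. Qed.

Let continuous_sqr_affine (c b : R) : continuous (fun w : R => (c + b * w) ^+ 2)%R.
Proof.
move=> w; apply: (@continuous_comp _ _ _ (fun w : R => c + b * w)%R (fun y => y ^+ 2)%R).
  by apply: continuousD; [exact: cst_continuous | exact: mulrl_continuous].
exact: exprn_continuous.
Qed.

Lemma normal_prob_sqr_affine_le (c b : R) :
  \int[G]_w ((c - b * w) ^+ 2)%:E <= (c ^+ 2 + b ^+ 2)%:E.
Proof.
have mB : measurable_fun setT (fun w : R => ((c - b * w) ^+ 2)%:E).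
  apply/measurable_EFinP/measurable_funX.
  by apply: measurable_funB => //; exact: measurable_funM.
have mD : measurable_fun setT (fun w : R => ((c + b * w) ^+ 2)%:E).
  by apply/measurable_EFinP; exact: measurable_sqr_affine.
(* the Gaussian is symmetric, so the cross terms of the two squares cancel *)
have symm : \int[G]_w ((c - b * w) ^+ 2)%:E = \int[G]_w ((c + b * w) ^+ 2)%:E.
  under eq_integral do rewrite -mulrN.
  exact: ge0_integral_normal_probN (fun w => sqr_ge0 _) (continuous_sqr_affine c b).
have c20 : (0 <= 2 * c ^+ 2)%R by rewrite mulr_ge0 ?sqr_ge0.
have b20 : (0 <= 2 * b ^+ 2)%R by rewrite mulr_ge0 ?sqr_ge0.
set F := \int[G]_w _.
have F0 : 0 <= F by apply: integral_ge0 => w _; rewrite lee_fin sqr_ge0.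
have FF : F + F = (2 * c ^+ 2)%:E + (2 * b ^+ 2)%:E * \int[G]_w (w ^+ 2)%:E.
  rewrite {2}/F symm /F -ge0_integralD//; last 2 first.
  - by move=> w _; rewrite lee_fin sqr_ge0.
  - by move=> w _; rewrite lee_fin sqr_ge0.
  rewrite -ge0_integralZl//; last 2 first.
  - by apply/measurable_EFinP; exact: measurable_funX.
  - by move=> w _; rewrite lee_fin sqr_ge0.
  rewrite -[X in X + _](integral_probability_cst G) -ge0_integralD//; last 2 first.
  - by move=> w _; rewrite -EFinM lee_fin mulr_ge0 ?sqr_ge0.
  - by apply: emeasurable_funM => //; apply/measurable_EFinP; exact: measurable_funX.
  by apply: eq_integral => w _; rewrite -EFinM -!EFinD; congr EFin; ring.
have : F + F <= (2 * c ^+ 2 + 2 * b ^+ 2)%:E.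
  rewrite FF EFinD leeD2l// -[leRHS]mule1.
  by apply: lee_wpmul2l; [rewrite lee_fin | exact: normal_second_moment_le1].
clear FF symm; clearbody F; move: F0; case: F => [r| |]//.
by rewrite -EFinD !lee_fin => r0 h; lra.
Qed.

End normal_affine_square.

Section sqnorm_sqdist.
Context {R : realType} {n : nat}.

Lemma sqnorm_ge0 (x : n.-tuple R) : 0 <= sqnorm x.
Proof. by apply: sumr_ge0 => i _; exact: sqr_ge0. Qed.

Lemma sqdist_ge0 (x y : n.-tuple R) : 0 <= sqdist x y.
Proof. by apply: sumr_ge0 => i _; exact: sqr_ge0. Qed.

Lemma measurable_sqnorm : measurable_fun setT (@sqnorm R n).
Proof.
apply: measurable_sum => i; apply: measurable_funX.
exact: measurable_tnth.
Qed.

Lemma measurable_sqdist :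
  measurable_fun setT (fun xy : n.-tuple R * n.-tuple R => sqdist xy.1 xy.2).
Proof.
apply: measurable_sum => i; apply: measurable_funX; apply: measurable_funB.
- exact: measurableT_comp (measurable_tnth i) measurable_fst.
- exact: measurableT_comp (measurable_tnth i) measurable_snd.
Qed.

End sqnorm_sqdist.

Section gauss_affine_cost.
Context {R : realType}.
Local Open Scope ereal_scope.

Lemma gauss_prob_sqdist_affine_le n (x : n.-tuple R) (a b : R) :
  \int[gauss_prob n]_z (sqdist x [tuple a * tnth x i + b * tnth z i | i < n])%:E
  <= ((1 - a) ^+ 2 * sqnorm x + n%:R * b ^+ 2)%:E.
Proof.
pose h (i : 'I_n) (w : R) := (((1 - a) * tnth x i - b * w) ^+ 2)%:E.
have mh i : measurable_fun setT (h i).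
  apply/measurable_EFinP/measurable_funX.
  by apply: measurable_funB => //; exact: measurable_funM.
have h0 i w : 0 <= h i w by rewrite lee_fin sqr_ge0.
have -> : \int[gauss_prob n]_z (sqdist x [tuple a * tnth x i + b * tnth z i | i < n])%:E =
          \sum_(i < n) \int[gauss_prob n]_z h i (tnth z i).
  rewrite -ge0_integral_sum//; last first.
    by move=> i; exact: measurableT_comp (mh i) (measurable_tnth i).
  apply: eq_integral => z _; rewrite sumEFin /sqdist; congr EFin.
  by apply: eq_bigr => i _; rewrite tnth_mktuple; congr (_ ^+ 2)%R; ring.
have -> : ((1 - a) ^+ 2 * sqnorm x + n%:R * b ^+ 2)%:E =
          \sum_(i < n) (((1 - a) * tnth x i) ^+ 2 + b ^+ 2)%:E.
  rewrite sumEFin big_split /= sumr_const card_ord /sqnorm mulr_sumr mulr_natl.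
  by under [in RHS]eq_bigr do rewrite exprMn.
apply: lee_sum => i _; rewrite ge0_integral_gauss_prob_tnth//.
exact: normal_prob_sqr_affine_le.
Qed.

End gauss_affine_cost.

Section ou_coupling.
Context {R : realType} {d : nat} (tau : R).
Local Open Scope ereal_scope.

Definition ou_pair (xz : d.-tuple R * d.-tuple R) : d.-tuple R * d.-tuple R :=
  (xz.1, ou_point tau xz.1 xz.2).

Lemma measurable_ou_pair : measurable_fun setT ou_pair.
Proof.
apply: measurable_fun_pair => //; apply/measurable_fun_tnthP => i.
rewrite (_ : _ \o _ = fun xz => expR (- tau) * tnth xz.1 i +
                     Num.sqrt (1 - expR (- (2 * tau))) * tnth xz.2 i)%R.
  apply: measurable_funD; apply: measurable_funM => //.
  - exact: measurableT_comp (measurable_tnth i) measurable_fst.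
  - exact: measurableT_comp (measurable_tnth i) measurable_snd.
by apply/funext => xz /=; rewrite tnth_mktuple.
Qed.

HB.instance Definition _ := isMeasurableFun.Build _ _ _ _ ou_pair measurable_ou_pair.

Let measurable_sqdistE :
  measurable_fun setT (fun xy : d.-tuple R * d.-tuple R => (sqdist xy.1 xy.2)%:E).
Proof. by apply/measurable_EFinP; exact: measurable_sqdist. Qed.

Lemma measurable_ou_cost : measurable_fun setT
  (fun xz : d.-tuple R * d.-tuple R => (sqdist xz.1 (ou_point tau xz.1 xz.2))%:E).
Proof. exact: measurableT_comp measurable_sqdistE measurable_ou_pair. Qed.

Variable p : probability (d.-tuple R) R.

Definition ou_coupling : probability (d.-tuple R * d.-tuple R)%type R :=
  distribution (p \x gauss_prob d) ou_pair.

Lemma coupling_ou_coupling : coupling p (ou_law p tau) ou_coupling.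
Proof.
split => A mA; rewrite /ou_coupling /distribution /pushforward /=.
- rewrite (_ : ou_pair @^-1` _ = A `*` setT); last first.
    by apply/seteqP; split => -[x z]//=; case.
  by rewrite product_measure1E// -[RHS]mule1; congr (_ * _); exact: probability_setT.
- apply: eq_integral => x _ /=; rewrite gauss_probE; congr std_gauss.
  by apply/seteqP; split => z /=; rewrite /xsection /= inE.
Qed.

Lemma integral_ou_coupling_sqdist :
  \int[ou_coupling]_xy (sqdist xy.1 xy.2)%:E =
  \int[p]_x \int[gauss_prob d]_z (sqdist x (ou_point tau x z))%:E.
Proof.
rewrite ge0_integral_distribution//; last by move=> xy; rewrite lee_fin sqdist_ge0.
rewrite fubini_tonelli1//; last by move=> xz; rewrite lee_fin sqdist_ge0.
exact: measurable_ou_cost.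
Qed.

End ou_coupling.

Section ou_coupling_cost.
Context {R : realType} {d : nat} (tau : R) (p : probability (d.-tuple R) R).
Local Open Scope ereal_scope.
Local Notation M := (\int[p]_x (sqnorm x)%:E).
Local Notation a := (expR (- tau)).
Local Notation b := (Num.sqrt (1 - expR (- (2 * tau)))).

Lemma ou_coupling_cost_le : M < +oo ->
  \int[ou_coupling tau p]_xy (sqdist xy.1 xy.2)%:E <=
  ((1 - a) ^+ 2 * fine M + d%:R * b ^+ 2)%:E.
Proof.
move=> Mfin.
have M0 : 0 <= M by apply: integral_ge0 => x _; rewrite lee_fin sqnorm_ge0.
have msqnorm : measurable_fun setT (fun x : d.-tuple R => (sqnorm x)%:E).
  by apply/measurable_EFinP; exact: measurable_sqnorm.
rewrite integral_ou_coupling_sqdist.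
apply: (@le_trans _ _ (\int[p]_x ((1 - a) ^+ 2 * sqnorm x + d%:R * b ^+ 2)%:E)).
  apply: ge0_le_integral => //.
  - by move=> x _; apply: integral_ge0 => z _; rewrite lee_fin sqdist_ge0.
  - apply: (measurable_fun_fubini_tonelli_F _ (@measurable_ou_cost R d tau)) => xz.
    by rewrite lee_fin sqdist_ge0.
  - apply/measurable_EFinP; apply: measurable_funD => //; apply: measurable_funM => //.
    exact: measurable_sqnorm.
  - by move=> x _; exact: gauss_prob_sqdist_affine_le.
under eq_integral do rewrite EFinD EFinM.
rewrite ge0_integralD//; last 2 first.
- by move=> x _; rewrite mule_ge0// lee_fin ?sqr_ge0 ?sqnorm_ge0.
- exact: emeasurable_funM.
rewrite ge0_integralZl//; last 2 first.
- by move=> x _; rewrite lee_fin sqnorm_ge0.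
- by rewrite lee_fin sqr_ge0.
by rewrite integral_probability_cst EFinD (EFinM ((1 - a) ^+ 2)) fineK ?ge0_fin_numE.
Qed.

End ou_coupling_cost.

Section ou_cost_arith.
Context {R : realType}.

Lemma onem_expRN_le (t : R) : 1 - expR (- t) <= t.
Proof. by have := expR_ge1Dx (- t); lra. Qed.

Lemma sqr_onem_expRN_mul_le {tau M n : R} : 0 < tau -> 0 <= M -> 1 <= n ->
  tau * M ^+ 2 < n -> (1 - expR (- tau)) ^+ 2 * M <= tau * n.
Proof.
move=> tau0 M0 n1 hM; have tau_ge0 := ltW tau0.
set u := 1 - expR (- tau).
have u0 : 0 <= u by rewrite subr_ge0 expR_le1 oppr_le0.
have u1 : u <= 1 by have := expR_gt0 (- tau); rewrite /u; lra.
have utau : u <= tau by exact: onem_expRN_le.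
have [M1|M1] := leP M 1.
  have h1 : u ^+ 2 * M <= u ^+ 2 by rewrite ler_piMr ?sqr_ge0.
  have h2 : u ^+ 2 <= u by rewrite expr2 ler_piMr.
  have h3 : tau <= tau * n by rewrite ler_peMr.
  lra.
have h1 : u ^+ 2 * M <= tau ^+ 2 * M.
  by apply: ler_wpM2r => //; rewrite ler_sqr ?nnegrE.
have h2 : tau ^+ 2 * M <= tau ^+ 2 * M ^+ 2.
  by apply: ler_wpM2l; rewrite ?sqr_ge0 // expr2 ler_peMr // ltW.
have h3 : tau ^+ 2 * M ^+ 2 <= tau * n.
  by rewrite expr2 -mulrA; apply: ler_wpM2l => //; rewrite ltW.
lra.
Qed.

Lemma ou_cost_le (tau M n : R) : 0 < tau -> 0 <= M -> 1 <= n -> tau * M ^+ 2 < n ->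
  (1 - expR (- tau)) ^+ 2 * M + n * Num.sqrt (1 - expR (- (2 * tau))) ^+ 2 <=
  3 * tau * n.
Proof.
move=> tau0 M0 n1 hM.
have := sqr_onem_expRN_mul_le tau0 M0 n1 hM.
have n0 : 0 <= n by lra.
have := ler_wpM2l n0 (onem_expRN_le (2 * tau)).
rewrite sqr_sqrtr; last by rewrite subr_ge0 expR_le1 oppr_le0 mulr_ge0 ?ltW.
lra.
Qed.

End ou_cost_arith.

Lemma W2_le_coupling {R : realType} {d : nat} {p q : set (d.-tuple R) -> \bar R}
    {P : probability (d.-tuple R * d.-tuple R)%type R} {c : R} :
  coupling p q P -> (\int[P]_xy (sqdist xy.1 xy.2)%:E <= c%:E)%E ->
  (W2 p q <= (Num.sqrt c)%:E)%E.
Proof.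
move=> coupling_pq cost_le.
have W2sq_le : (W2sq p q <= c%:E)%E.
  by apply: ge_ereal_inf; exists (\int[P]_xy (sqdist xy.1 xy.2)%:E)%E => //; exists P.
have W2sq_ge0 : (0 <= W2sq p q)%E.
  apply: le_ereal_inf_tmp => _ [P' [_ ->]].
  by apply: integral_ge0 => xy _; rewrite lee_fin sqdist_ge0.
rewrite /W2; move: W2sq_ge0 W2sq_le; case: (W2sq p q) => [w| |]//= w0 wc.
by rewrite lee_fin ler_wsqrtr // -lee_fin.
Qed.

Theorem lemma1 (R : realType) (d : nat)
    (p : probability (d.-tuple R) R) (tau : R) :
  (\int[p]_x (sqnorm x)%:E < +oo)%E ->
  0 < tau ->
  tau * (fine (\int[p]_x (sqnorm x)%:E)) ^+ 2 < d%:R ->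
  (W2 p (ou_law p tau) <= (Num.sqrt (3 * tau * d%:R))%:E)%E.
Proof.
move=> Mfin tau0 hM.
have M0 : 0 <= fine (\int[p]_x (sqnorm x)%:E).
  by apply/fine_ge0/integral_ge0 => x _; rewrite lee_fin sqnorm_ge0.
have d0 : 0 < d%:R :> R by apply: le_lt_trans hM; rewrite mulr_ge0 ?sqr_ge0 ?ltW.
have d1 : 1 <= d%:R :> R by rewrite ler1n -(ltr0n R).
apply: (W2_le_coupling (coupling_ou_coupling tau p)).
apply: le_trans (ou_coupling_cost_le tau p Mfin) _.
by rewrite lee_fin; exact: ou_cost_le.
Qed.
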